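(* Let $G$ be a finitely generated group which is either a free product $G=H*_F K$ of finitely generated groups $H$ and $K$ amalgamating finite subgroups of $H$ and $K$, or an HNN extension with finitely generated base group $H$ and two finite associated subgroups of $H$. Then there is a finite generating set $S_H$ of $H$, closed under inverses, and a finite generating set $S_G\supseteq S_H$ of $G$, closed under inverses, such that $d_H(h_1,h_2)=d_G(h_1,h_2)$ for all $h_1,h_2\in H$, where $d_H$ and $d_G$ are the word metrics with respect to $S_H$ and $S_G$ respectively.
   Context: For a group $X$ with finite generating set $T$ closed under inverses, the word metric is $d(x,x')$ = length of a shortest word in $T$ representing $x^{-1}x'$. *)

From Stdlib Require Import List Arith.
Import ListNotations.

Record group := Group {
  gcar :> Type;
  gmul : gcar -> gcar -> gcar;
  ginv : gcar -> gcar;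
  gone : gcar;
  gmulA : forall x y z, gmul x (gmul y z) = gmul (gmul x y) z;
  gmul1l : forall x, gmul gone x = x;
  gmul1r : forall x, gmul x gone = x;
  gmulVl : forall x, gmul (ginv x) x = gone;
  gmulVr : forall x, gmul x (ginv x) = gone
}.
Arguments gmul {g}. Arguments ginv {g}. Arguments gone {g}.

Definition is_hom {G L : group} (f : G -> L) : Prop :=
  forall x y : G, f (gmul x y) = gmul (f x) (f y).

Definition injective {A B : Type} (f : A -> B) : Prop :=
  forall x y, f x = f y -> x = y.

Definition wprod {G : group} (w : list G) : G := fold_right gmul gone w.

Definition word_in {G : group} (S : list G) (w : list G) : Prop :=
  forall x, In x w -> In x S.

Definition gen_set (G : group) (S : list G) : Prop :=
  (forall s, In s S -> In (ginv s) S) /\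
  (forall g : G, exists w, word_in S w /\ wprod w = g).

Definition finitely_generated (G : group) : Prop :=
  exists S : list G, forall g : G, exists w, word_in S w /\ wprod w = g.

Definition finite_group (G : group) : Prop :=
  exists l : list G, forall g : G, In g l.

Definition word_dist (G : group) (S : list G) (x y : G) (n : nat) : Prop :=
  (exists w, word_in S w /\ wprod w = gmul (ginv x) y /\ length w = n) /\
  (forall w, word_in S w -> wprod w = gmul (ginv x) y -> n <= length w).

(* G is the free product of H and K amalgamating F, where a : F -> H and
   b : F -> K are the injective inclusions: (G, i, j) is the pushout of
   H <- F -> K in the category of groups. *)
Definition is_amalgam (G H K F : group) (i : H -> G) (j : K -> G)
    (a : F -> H) (b : F -> K) : Prop :=
  is_hom i /\ is_hom j /\ (forall f : F, i (a f) = j (b f)) /\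
  forall (L : group) (p : H -> L) (q : K -> L),
    is_hom p -> is_hom q -> (forall f : F, p (a f) = q (b f)) ->
    (exists g : G -> L, is_hom g /\ (forall h, g (i h) = p h) /\
                        (forall k, g (j k) = q k)) /\
    (forall g1 g2 : G -> L, is_hom g1 -> is_hom g2 ->
       (forall h, g1 (i h) = p h) -> (forall k, g1 (j k) = q k) ->
       (forall h, g2 (i h) = p h) -> (forall k, g2 (j k) = q k) ->
       forall x, g1 x = g2 x).

(* G is the HNN extension of H with associated subgroups a(F), b(F)
   (a, b : F -> H injective, identified via b o a^-1) and stable letter t:
   G = < H, t | t a(f) t^-1 = b(f) >, stated by its universal property. *)
Definition is_HNN (G H F : group) (i : H -> G) (t : G)
    (a b : F -> H) : Prop :=
  is_hom i /\ (forall f : F, gmul (gmul t (i (a f))) (ginv t) = i (b f)) /\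
  forall (L : group) (p : H -> L) (s : L),
    is_hom p -> (forall f : F, gmul (gmul s (p (a f))) (ginv s) = p (b f)) ->
    (exists g : G -> L, is_hom g /\ (forall h, g (i h) = p h) /\ g t = s) /\
    (forall g1 g2 : G -> L, is_hom g1 -> is_hom g2 ->
       (forall h, g1 (i h) = p h) -> g1 t = s ->
       (forall h, g2 (i h) = p h) -> g2 t = s ->
       forall x, g1 x = g2 x).

(** Take for [S_H] a symmetric generating set of [H] containing the finite associated
    subgroup(s), and for [S_G] its image together with generators of [K] (resp. [t] and
    [t^-1]).  Distances can only shrink from [H] to [G], so the point is the lower bound
    [d_G(1, h) >= d_H(1, h)].  Through the universal property, [G] acts on normal forms
    (reduced sequences of right coset representatives), and the [H]-length of the last
    syllable is a cost that every letter of [S_G] changes by at most one -- moving an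
    element of an associated subgroup across a syllable costs one, as it lies in [S_H] --
    and that equals [d_H(1, h)] at [h] applied to the empty form.  That [S_G] generates [G]
    is also read off the universal property: homomorphisms out of [G] are determined by
    their values on [S_G]. *)

From Stdlib Require Import List Arith Lia Bool.
From Stdlib Require Import ClassicalEpsilon FunctionalExtensionality PropExtensionality.
Import ListNotations.

Section GroupFacts.
Context {G : group}.
Implicit Types x y z : G.

Lemma mul_cancel_l x y z : gmul x y = gmul x z -> y = z.
Proof.
  intro E. rewrite <- (gmul1l _ y), <- (gmul1l _ z), <- (gmulVl _ x), <- !gmulA, E.
  reflexivity.
Qed.

Lemma mul_cancel_r x y z : gmul y x = gmul z x -> y = z.
Proof.
  intro E. rewrite <- (gmul1r _ y), <- (gmul1r _ z), <- (gmulVr _ x), !gmulA, E.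
  reflexivity.
Qed.

Lemma inv_unique x y : gmul x y = gone -> ginv x = y.
Proof. intro E. apply (mul_cancel_l x). rewrite gmulVr; auto. Qed.

Lemma inv_inv x : ginv (ginv x) = x.
Proof. apply inv_unique, gmulVl. Qed.

Lemma mulKg x y : gmul (ginv x) (gmul x y) = y.
Proof. rewrite gmulA, gmulVl, gmul1l. reflexivity. Qed.

End GroupFacts.

Section Homomorphisms.
Context {G L : group} (f : G -> L).
Hypothesis f_hom : is_hom f.

Lemma hom_one : f gone = gone.
Proof. apply (mul_cancel_l (f gone)). rewrite <- f_hom, !gmul1r. reflexivity. Qed.

Lemma hom_inv x : f (ginv x) = ginv (f x).
Proof. symmetry. apply inv_unique. rewrite <- f_hom, gmulVr. apply hom_one. Qed.

Lemma wprod_map (w : list G) : wprod (map f w) = f (wprod w).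
Proof.
  induction w as [|x w IH]; simpl; [symmetry; apply hom_one|].
  rewrite IH, f_hom. reflexivity.
Qed.

End Homomorphisms.

Lemma hom_comp {G K L : group} (f : G -> K) (g : K -> L) :
  is_hom f -> is_hom g -> is_hom (fun x => g (f x)).
Proof. intros Hf Hg x y. rewrite Hf, Hg. reflexivity. Qed.

Lemma hom_conj {G L : group} (p : G -> L) (s : L) :
  is_hom p -> is_hom (fun x => gmul (gmul s (p x)) (ginv s)).
Proof.
  intros Hp x y. rewrite Hp, !gmulA, <- (gmulA _ _ (ginv s) s), gmulVl, gmul1r. reflexivity.
Qed.

Record perm (X : Type) := Perm {
  perm_fun : X -> X;
  perm_invfun : X -> X;
  perm_funK : forall x, perm_fun (perm_invfun x) = x;
  perm_invfunK : forall x, perm_invfun (perm_fun x) = x }.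
Arguments Perm {X}. Arguments perm_fun {X}. Arguments perm_invfun {X}.
Arguments perm_funK {X}. Arguments perm_invfunK {X}.

Lemma perm_ext {X : Type} (p q : perm X) : (forall x, perm_fun p x = perm_fun q x) -> p = q.
Proof.
  destruct p as [f g fK gK], q as [f' g' fK' gK']; simpl; intro E.
  assert (f = f') as <- by (apply functional_extensionality; auto).
  assert (g = g') as <-.
  { apply functional_extensionality; intro x.
    rewrite <- (fK' x) at 1. rewrite gK. reflexivity. }
  f_equal; apply proof_irrelevance.
Qed.

Definition perm_comp {X : Type} (p q : perm X) : perm X.
Proof.
  refine (Perm (fun x => perm_fun p (perm_fun q x)) (fun x => perm_invfun q (perm_invfun p x)) _ _);
  intro x; rewrite ?perm_funK, ?perm_invfunK; reflexivity.
Defined.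

Definition perm_group (X : Type) : group.
Proof.
  refine (@Group (perm X) perm_comp
    (fun p => Perm (perm_invfun p) (perm_fun p) (perm_invfunK p) (perm_funK p))
    (Perm (fun x => x) (fun x => x) (fun _ => eq_refl) (fun _ => eq_refl)) _ _ _ _ _);
  intros; apply perm_ext; intros; simpl; rewrite ?perm_funK, ?perm_invfunK; reflexivity.
Defined.

Section ActionAsPermutations.
Context {G : group} {X : Type} (act : G -> X -> X).
Hypotheses (act_one : forall x, act gone x = x)
           (act_mul : forall g h x, act (gmul g h) x = act g (act h x)).

Definition act_perm (g : G) : perm_group X.
Proof.
  refine (Perm (act g) (act (ginv g)) _ _); intro x;
  rewrite <- act_mul; [rewrite gmulVr | rewrite gmulVl]; apply act_one.
Defined.

Lemma act_perm_hom : is_hom act_perm.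
Proof. intros g h. apply perm_ext. intro x. apply act_mul. Qed.

End ActionAsPermutations.

Definition span {G : group} (gens : list G) (g : G) : Prop :=
  exists w, word_in gens w /\ wprod w = g.

Section Span.
Context {G : group} (gens : list G).

Lemma span_one : span gens gone.
Proof. exists []. split; [intros x []|reflexivity]. Qed.

Lemma span_cons s g : In s gens -> span gens g -> span gens (gmul s g).
Proof.
  intros Hs [w [Hw <-]]. exists (s :: w). split; [|reflexivity].
  intros x [<-|Hx]; auto.
Qed.

Lemma hom_eq_on_span {L : group} (p q : G -> L) :
  is_hom p -> is_hom q -> (forall s, In s gens -> p s = q s) ->
  forall g, span gens g -> p g = q g.
Proof.
  intros Hp Hq E g [w [Hw <-]].
  rewrite <- (wprod_map p), <- (wprod_map q); auto. f_equal.
  apply map_ext_in. intros x Hx. auto.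
Qed.

End Span.

Lemma gen_set_symmetrize {G : group} (L0 L : list G) :
  incl L0 L -> (forall g, span L0 g) -> gen_set G (L ++ map ginv L).
Proof.
  intros Hsub Hgen. split.
  - intros s Hs. apply in_app_or in Hs as [Hs|Hs]; apply in_or_app.
    + right. apply in_map; auto.
    + left. apply in_map_iff in Hs as [y [<- Hy]]. rewrite inv_inv; auto.
  - intro g. destruct (Hgen g) as [w [Hw E]]. exists w. split; auto.
    intros x Hx. apply in_or_app. left. auto.
Qed.

Definition truth (P : Prop) : bool := if excluded_middle_informative P then true else false.

Lemma truth_true (P : Prop) : truth P = true <-> P.
Proof. unfold truth. destruct excluded_middle_informative; split; auto; discriminate. Qed.

Lemma truth_iff (P Q : Prop) : (P <-> Q) -> truth P = truth Q.
Proof. intro E. apply propositional_extensionality in E. subst. reflexivity. Qed.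

(** The span [W] of a list is detected by comparing the translation action of [G] on
    [G * bool] with its conjugate by the involution flipping the bit over [W]: the two
    agree exactly at the elements that stabilize [W]. *)
Section GenerationCriterion.
Context {G : group}.

Definition translate_act (x : G) (p : G * bool) : G * bool := (gmul x (fst p), snd p).

Lemma translate_act_one p : translate_act gone p = p.
Proof. destruct p. unfold translate_act. simpl. rewrite gmul1l. reflexivity. Qed.

Lemma translate_act_mul x y p :
  translate_act (gmul x y) p = translate_act x (translate_act y p).
Proof. destruct p. unfold translate_act. simpl. rewrite gmulA. reflexivity. Qed.

Definition translate : G -> perm_group (G * bool) :=
  act_perm translate_act translate_act_one translate_act_mul.

Definition flip_over_act (W : G -> Prop) (p : G * bool) : G * bool :=
  (fst p, xorb (snd p) (truth (W (fst p)))).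

Lemma flip_over_actK W p : flip_over_act W (flip_over_act W p) = p.
Proof.
  destruct p as [y c]. unfold flip_over_act. simpl.
  rewrite xorb_assoc, xorb_nilpotent, xorb_false_r. reflexivity.
Qed.

Definition flip_over (W : G -> Prop) : perm_group (G * bool) :=
  Perm (flip_over_act W) (flip_over_act W) (flip_over_actK W) (flip_over_actK W).

Definition twisted_translate (W : G -> Prop) (x : G) : perm_group (G * bool) :=
  gmul (gmul (flip_over W) (translate x)) (ginv (flip_over W)).

Lemma twisted_translate_stable W x :
  (forall y, W (gmul x y) <-> W y) -> twisted_translate W x = translate x.
Proof.
  intro Hx. apply perm_ext. intros [y c]. simpl. unfold flip_over_act, translate_act. simpl.
  rewrite (truth_iff _ _ (Hx y)), xorb_assoc, xorb_nilpotent, xorb_false_r.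
  reflexivity.
Qed.

Lemma twisted_translate_trivial W x :
  W gone -> twisted_translate W x = translate x -> W x.
Proof.
  intros W1 E. apply (f_equal (fun p => perm_fun p (gone, false))) in E.
  simpl in E. unfold flip_over_act, translate_act in E. simpl in E.
  rewrite gmul1r in E. injection E as E.
  rewrite (proj2 (truth_true _) W1) in E.
  destruct (truth (W x)) eqn:Wx; [apply truth_true; exact Wx | discriminate].
Qed.

Lemma gen_set_of_homs_determined (gens : list G) :
  (forall s, In s gens -> In (ginv s) gens) ->
  (forall p q : G -> perm_group (G * bool), is_hom p -> is_hom q ->
     (forall s, In s gens -> p s = q s) -> forall x, p x = q x) ->
  gen_set G gens.
Proof.
  intros Hinv Hdet. split; [exact Hinv|]. intro g.
  apply (twisted_translate_trivial (span gens)); [apply span_one|].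
  apply Hdet.
  - apply hom_conj, act_perm_hom.
  - apply act_perm_hom.
  - intros s Hs. apply twisted_translate_stable. intro y. split.
    + intro Hy. rewrite <- (mulKg s y). apply span_cons; auto.
    + apply span_cons; auto.
Qed.

End GenerationCriterion.

Section WordLength.
Context {G : group} (gens : list G).

Definition word_length_is (g : G) (n : nat) : Prop :=
  (exists w, word_in gens w /\ wprod w = g /\ length w = n) /\
  (forall w, word_in gens w -> wprod w = g -> n <= length w).

Lemma word_length_is_unique g n m : word_length_is g n -> word_length_is g m -> n = m.
Proof.
  intros [[w1 [W1 [E1 L1]]] M1] [[w2 [W2 [E2 L2]]] M2].
  specialize (M1 w2 W2 E2). specialize (M2 w1 W1 E1). lia.
Qed.

Lemma word_length_exists g : span gens g -> exists n, word_length_is g n.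
Proof.
  intros [w [Hw E]].
  destruct (dec_inh_nat_subset_has_unique_least_element
     (fun n => exists w, word_in gens w /\ wprod w = g /\ length w = n))
    as [n [[Hn Hmin] _]].
  - intro n. apply classic.
  - exists (length w), w. auto.
  - exists n. split; auto. intros v Hv Ev. apply Hmin. exists v. auto.
Qed.

Definition word_length (g : G) : nat := epsilon (inhabits 0) (word_length_is g).

Lemma word_length_spec g : span gens g -> word_length_is g (word_length g).
Proof. intro Hg. apply (epsilon_spec (inhabits 0) (word_length_is g)), word_length_exists, Hg. Qed.

Lemma word_length_le w : word_in gens w -> word_length (wprod w) <= length w.
Proof.
  intro Hw. apply (word_length_spec (wprod w)); auto. exists w. auto.
Qed.

Lemma word_length_one : word_length gone = 0.
Proof. apply Nat.le_0_r, (word_length_le []). intros x []. Qed.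

Lemma word_length_mul_gen s g :
  In s gens -> span gens g -> word_length (gmul s g) <= S (word_length g).
Proof.
  intros Hs Hg. destruct (proj1 (word_length_spec g Hg)) as [w [Hw [<- <-]]].
  apply (word_length_le (s :: w)). intros x [<-|Hx]; auto.
Qed.

End WordLength.

Lemma word_dist_iff_of_lower_bound {G H : group} (i : H -> G) (SH : list H) (SG : list G) :
  is_hom i -> gen_set H SH -> (forall s, In s SH -> In (i s) SG) ->
  (forall h w, word_in SG w -> wprod w = i h -> word_length SH h <= length w) ->
  forall h1 h2 n, word_dist H SH h1 h2 n <-> word_dist G SG (i h1) (i h2) n.
Proof.
  intros Hi [_ HSH] Hsub Hlow h1 h2 n.
  change (word_length_is SH (gmul (ginv h1) h2) n <->
          word_length_is SG (gmul (ginv (i h1)) (i h2)) n).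
  rewrite <- (hom_inv i Hi), <- Hi. set (h := gmul (ginv h1) h2).
  assert (DH : word_length_is SH h (word_length SH h)) by apply word_length_spec, HSH.
  assert (DG : word_length_is SG (i h) (word_length SH h)).
  { split.
    - destruct (proj1 DH) as [w [Hw [E L]]]. exists (map i w). split; [|split].
      + intros x Hx. apply in_map_iff in Hx as [y [<- Hy]]. auto.
      + rewrite wprod_map, E; auto.
      + rewrite length_map; auto.
    - intros w Hw E. apply Hlow; auto. }
  split; intro D.
  - rewrite (word_length_is_unique _ _ _ _ D DH). exact DG.
  - rewrite (word_length_is_unique _ _ _ _ D DG). exact DH.
Qed.

Lemma cost_wprod_le {G : group} {X : Type} (p : G -> perm_group X) (gens : list G)
    (c : X -> nat) :
  is_hom p -> (forall s x, In s gens -> c (perm_fun (p s) x) <= S (c x)) ->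
  forall w x, word_in gens w -> c (perm_fun (p (wprod w)) x) <= length w + c x.
Proof.
  intros Hp Hc w x. induction w as [|s w IH]; intro Hw; simpl.
  - rewrite (hom_one p Hp). simpl. lia.
  - rewrite Hp. simpl. eapply Nat.le_trans; [apply Hc; apply Hw; left; reflexivity|].
    apply le_n_S, IH. intros y Hy. apply Hw. right. exact Hy.
Qed.

Lemma word_dist_iff_of_cost {G H : group} {X : Type} (i : H -> G) (SH : list H)
    (SG : list G) (p : G -> perm_group X) (c : X -> nat) (x0 : X) :
  is_hom i -> is_hom p -> gen_set H SH -> (forall s, In s SH -> In (i s) SG) ->
  (forall s x, In s SG -> c (perm_fun (p s) x) <= S (c x)) ->
  (forall h, c (perm_fun (p (i h)) x0) = word_length SH h) ->
  forall h1 h2 n, word_dist H SH h1 h2 n <-> word_dist G SG (i h1) (i h2) n.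
Proof.
  intros Hi Hp HSH Hsub Hc Hbase.
  assert (c0 : c x0 = 0).
  { specialize (Hbase gone). rewrite (hom_one i Hi), (hom_one p Hp), word_length_one in Hbase.
    exact Hbase. }
  apply word_dist_iff_of_lower_bound; auto.
  intros h w Hw E. rewrite <- Hbase, <- E, <- (Nat.add_0_r (length w)), <- c0.
  apply (cost_wprod_le p SG); auto.
Qed.

Definition embedding {F A : group} (a : F -> A) : Prop := is_hom a /\ injective a.

Section RightCosets.
Context {F A : group} (a : F -> A).
Hypothesis a_emb : embedding a.

Definition in_img (x : A) : Prop := exists f, a f = x.
Definition same_coset (x y : A) : Prop := exists f, x = gmul (a f) y.

Definition rep (x : A) : A :=
  epsilon (inhabits x) (fun r => same_coset r x /\ (in_img r -> r = gone)).
Definition fpart (x : A) : F := epsilon (inhabits gone) (fun f => x = gmul (a f) (rep x)).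

Let a_hom : is_hom a := proj1 a_emb.
Let a_inj : injective a := proj2 a_emb.

Lemma same_coset_sym x y : same_coset x y -> same_coset y x.
Proof.
  intros [f ->]. exists (ginv f).
  rewrite gmulA, <- a_hom, gmulVl, (hom_one a a_hom), gmul1l. reflexivity.
Qed.

Lemma same_coset_trans x y z : same_coset x y -> same_coset y z -> same_coset x z.
Proof. intros [f ->] [g ->]. exists (gmul f g). rewrite a_hom, gmulA. reflexivity. Qed.

Lemma in_img_same_coset x y : same_coset x y -> in_img y -> in_img x.
Proof. intros [f ->] [g <-]. exists (gmul f g). apply a_hom. Qed.

Lemma rep_spec x : same_coset (rep x) x /\ (in_img (rep x) -> rep x = gone).
Proof.
  apply (epsilon_spec (inhabits x) (fun r => same_coset r x /\ (in_img r -> r = gone))).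
  destruct (classic (in_img x)) as [[f <-]|Nx].
  - exists gone. split; auto. apply same_coset_sym. exists f. rewrite gmul1r. reflexivity.
  - exists x. split; [|tauto]. exists gone. rewrite (hom_one a a_hom), gmul1l. reflexivity.
Qed.

Lemma rep_congr x y : same_coset x y -> rep x = rep y.
Proof.
  intro Hxy. unfold rep. rewrite (proof_irrelevance _ (inhabits x) (inhabits y)).
  f_equal. apply functional_extensionality. intro r. apply propositional_extensionality.
  split; intros [Hr Hn]; split; auto.
  - eapply same_coset_trans; eauto.
  - eapply same_coset_trans; eauto. apply same_coset_sym; auto.
Qed.

Lemma fpart_spec x : x = gmul (a (fpart x)) (rep x).
Proof.
  apply (epsilon_spec (inhabits gone) (fun f => x = gmul (a f) (rep x))).
  destruct (same_coset_sym _ _ (proj1 (rep_spec x))) as [f Hf]. eauto.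
Qed.

Lemma rep_mul f x : rep (gmul (a f) x) = rep x.
Proof. apply rep_congr. exists f. reflexivity. Qed.

Lemma fpart_mul f x : fpart (gmul (a f) x) = gmul f (fpart x).
Proof.
  apply a_inj, (mul_cancel_r (rep x)).
  rewrite a_hom, <- gmulA, <- (fpart_spec x).
  rewrite <- (rep_mul f x) at 1.
  rewrite <- fpart_spec. reflexivity.
Qed.

Lemma rep_in_img x : in_img x -> rep x = gone.
Proof.
  intro Hx. apply (proj2 (rep_spec x)). eapply in_img_same_coset; eauto. apply rep_spec.
Qed.

Lemma in_img_rep_one x : rep x = gone -> in_img x.
Proof. intro E. exists (fpart x). rewrite (fpart_spec x) at 2. rewrite E, gmul1r. reflexivity. Qed.

Lemma rep_idem x : rep (rep x) = rep x.
Proof. apply rep_congr, rep_spec. Qed.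

Lemma not_in_img_rep x : ~ in_img x -> ~ in_img (rep x).
Proof.
  intros Nx Hr. apply Nx. eapply in_img_same_coset; eauto.
  apply same_coset_sym, rep_spec.
Qed.

Lemma rep_fixed_in_img r : rep r = r -> in_img r -> r = gone.
Proof. intros E Hr. rewrite <- E. apply rep_in_img, Hr. Qed.

Lemma fpart_rep_fixed r : rep r = r -> fpart r = gone.
Proof.
  intro E. apply a_inj. rewrite (hom_one a a_hom). apply (mul_cancel_r r).
  assert (D := fpart_spec r). rewrite E in D. rewrite gmul1l. symmetry. exact D.
Qed.

Lemma fpart_img f : fpart (a f) = f.
Proof.
  rewrite <- (gmul1r _ (a f)), fpart_mul, fpart_rep_fixed, gmul1r; auto.
  apply rep_in_img. exists gone. apply (hom_one a a_hom).
Qed.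

Lemma img_fpart x : in_img x -> a (fpart x) = x.
Proof. intro Hx. rewrite (fpart_spec x) at 2. rewrite rep_in_img, gmul1r; auto. Qed.

Lemma in_img_mul f x : in_img (gmul (a f) x) <-> in_img x.
Proof.
  split; apply in_img_same_coset.
  - apply same_coset_sym. exists f. reflexivity.
  - exists f. reflexivity.
Qed.

End RightCosets.

(** * Normal forms in an amalgamated product *)

(** A state [(f, [l1; ...; ln])] stands for [a f * l1 * ... * ln], where the [li] are
    alternately [A]- and [B]-letters, each a nontrivial representative of a right coset of
    the amalgamated subgroup.  [A] acts by multiplying into the head and renormalizing;
    states whose list is not reduced are junk and are left fixed. *)
Section AmalgamHalfAction.
Context {F A B : group} (a : F -> A) (b : F -> B).

Definition reduced_letter (l : A + B) : Prop :=
  match l with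
  | inl t => rep a t = t /\ ~ in_img a t
  | inr u => rep b u = u /\ ~ in_img b u
  end.

Definition alternates (l : A + B) (s : list (A + B)) : Prop :=
  match l, s with
  | inl _, inl _ :: _ | inr _, inr _ :: _ => False
  | _, _ => True
  end.

Fixpoint reduced (s : list (A + B)) : Prop :=
  match s with
  | [] => True
  | l :: r => reduced_letter l /\ alternates l r /\ reduced r
  end.

Definition no_A_head (s : list (A + B)) : Prop :=
  match s with inl _ :: _ => False | _ => True end.

Definition unfold_head (x : F * list (A + B)) : A * list (A + B) :=
  match snd x with
  | inl t :: r => (gmul (a (fst x)) t, r)
  | _ => (a (fst x), snd x)
  end.

Definition fold_head (p : A * list (A + B)) : F * list (A + B) :=
  if excluded_middle_informative (in_img a (fst p)) then (fpart a (fst p), snd p)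
  else (fpart a (fst p), inl (rep a (fst p)) :: snd p).

Definition amal_act_l (s : A) (x : F * list (A + B)) : F * list (A + B) :=
  if excluded_middle_informative (reduced (snd x))
  then fold_head (gmul s (fst (unfold_head x)), snd (unfold_head x))
  else x.

Hypothesis a_emb : embedding a.

Lemma fold_head_img h y : in_img a h -> fold_head (h, y) = (fpart a h, y).
Proof. intro Hh. unfold fold_head. simpl. destruct excluded_middle_informative; tauto. Qed.

Lemma fold_head_not_img h y :
  ~ in_img a h -> fold_head (h, y) = (fpart a h, inl (rep a h) :: y).
Proof. intro Hh. unfold fold_head. simpl. destruct excluded_middle_informative; tauto. Qed.

Lemma fold_unfold_head f s : reduced s -> fold_head (unfold_head (f, s)) = (f, s).
Proof.
  intro Hs. assert (Hf : in_img a (a f)) by (exists f; reflexivity).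
  destruct s as [|[t|u] r]; unfold unfold_head; simpl.
  - rewrite fold_head_img, fpart_img; auto.
  - destruct Hs as [[Et Nt] _]. rewrite fold_head_not_img by (rewrite in_img_mul; auto).
    rewrite fpart_mul, fpart_rep_fixed, gmul1r, rep_mul, Et; auto.
  - rewrite fold_head_img, fpart_img; auto.
Qed.

Lemma unfold_fold_head h y : no_A_head y -> unfold_head (fold_head (h, y)) = (h, y).
Proof.
  intro Hy. destruct (classic (in_img a h)) as [Hh|Hh].
  - rewrite fold_head_img by exact Hh. unfold unfold_head. simpl.
    rewrite img_fpart by auto. destruct y as [|[t|u] r]; simpl in Hy; tauto.
  - rewrite fold_head_not_img by exact Hh. unfold unfold_head. simpl.
    rewrite <- fpart_spec; auto.
Qed.

Lemma unfold_head_reduced f s :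
  reduced s -> reduced (snd (unfold_head (f, s))) /\ no_A_head (snd (unfold_head (f, s))).
Proof.
  intro Hs. destruct s as [|[t|u] r]; unfold unfold_head; simpl in *; tauto.
Qed.

Lemma fold_head_reduced h y :
  reduced y -> no_A_head y -> reduced (snd (fold_head (h, y))).
Proof.
  intros Hy Ny. destruct (classic (in_img a h)) as [Hh|Hh].
  - rewrite fold_head_img; auto.
  - rewrite fold_head_not_img by exact Hh. simpl. split; [|split; auto].
    split; [apply rep_idem | apply not_in_img_rep]; auto.
Qed.

Lemma amal_act_l_not_reduced s x : ~ reduced (snd x) -> amal_act_l s x = x.
Proof. intro N. unfold amal_act_l. destruct excluded_middle_informative; tauto. Qed.

Lemma amal_act_l_reduced s f l : reduced l ->
  amal_act_l s (f, l) = fold_head (gmul s (fst (unfold_head (f, l))), snd (unfold_head (f, l))).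
Proof. intro Hl. unfold amal_act_l. destruct excluded_middle_informative; tauto. Qed.

Lemma amal_act_l_one x : amal_act_l gone x = x.
Proof.
  destruct x as [f l]. destruct (classic (reduced l)) as [Hl|Hl].
  - rewrite amal_act_l_reduced, gmul1l, <- surjective_pairing by exact Hl.
    apply fold_unfold_head, Hl.
  - apply amal_act_l_not_reduced, Hl.
Qed.

Lemma amal_act_l_fold s h y :
  reduced y -> no_A_head y -> amal_act_l s (fold_head (h, y)) = fold_head (gmul s h, y).
Proof.
  intros Hy Ny. assert (Hp := fold_head_reduced h y Hy Ny).
  destruct (fold_head (h, y)) as [f l] eqn:E.
  rewrite amal_act_l_reduced, <- E, unfold_fold_head by assumption. reflexivity.
Qed.

Lemma amal_act_l_mul s1 s2 x :
  amal_act_l (gmul s1 s2) x = amal_act_l s1 (amal_act_l s2 x).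
Proof.
  destruct x as [f l]. destruct (classic (reduced l)) as [Hl|Hl].
  - destruct (unfold_head_reduced f l Hl) as [Hr Nr].
    rewrite !amal_act_l_reduced, amal_act_l_fold, gmulA by assumption. reflexivity.
  - rewrite !(amal_act_l_not_reduced _ (f, l)) by exact Hl. reflexivity.
Qed.

Lemma amal_act_l_img g f l : reduced l -> amal_act_l (a g) (f, l) = (gmul g f, l).
Proof.
  intro Hl. rewrite amal_act_l_reduced by exact Hl.
  rewrite <- (fold_unfold_head (gmul g f) l Hl). f_equal.
  destruct l as [|[t|u] r]; unfold unfold_head; simpl;
    rewrite (proj1 a_emb); try rewrite gmulA; reflexivity.
Qed.

Lemma amal_act_l_tail s f l : reduced l ->
  exists y, (l = y /\ no_A_head y \/ exists t, l = inl t :: y) /\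
            (snd (amal_act_l s (f, l)) = y \/ exists t, snd (amal_act_l s (f, l)) = inl t :: y).
Proof.
  intro Hl. exists (snd (unfold_head (f, l))). split.
  - destruct l as [|[t|u] r]; unfold unfold_head; simpl; eauto.
  - rewrite amal_act_l_reduced by exact Hl. unfold fold_head. simpl.
    destruct excluded_middle_informative; simpl; eauto.
Qed.

End AmalgamHalfAction.

Definition swap_letter {A B : Type} (l : A + B) : B + A :=
  match l with inl x => inr x | inr y => inl y end.

Definition swap_state {F A B : Type} (x : F * list (A + B)) : F * list (B + A) :=
  (fst x, map swap_letter (snd x)).

Lemma swap_stateK {F A B : Type} (x : F * list (A + B)) : swap_state (swap_state x) = x.
Proof.
  destruct x as [f s]. unfold swap_state. simpl. f_equal.
  induction s as [|[] r IH]; simpl; f_equal; auto.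
Qed.

Lemma reduced_swap {F A B : group} (a : F -> A) (b : F -> B) s :
  reduced b a (map swap_letter s) <-> reduced a b s.
Proof.
  induction s as [|l r IH]; simpl; [tauto|].
  assert (alternates (swap_letter l) (map swap_letter r) <-> alternates l r)
    by (destruct l, r as [|[]]; simpl; tauto).
  destruct l; simpl; tauto.
Qed.

Definition amal_act_r {F A B : group} (a : F -> A) (b : F -> B) (k : B)
    (x : F * list (A + B)) : F * list (A + B) :=
  swap_state (amal_act_l b a k (swap_state x)).

Section AmalgamOtherHalfAction.
Context {F A B : group} (a : F -> A) (b : F -> B).
Hypothesis b_emb : embedding b.

Lemma amal_act_r_one x : amal_act_r a b gone x = x.
Proof. unfold amal_act_r. rewrite amal_act_l_one, swap_stateK; auto. Qed.

Lemma amal_act_r_mul k1 k2 x :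
  amal_act_r a b (gmul k1 k2) x = amal_act_r a b k1 (amal_act_r a b k2 x).
Proof. unfold amal_act_r. rewrite swap_stateK, amal_act_l_mul; auto. Qed.

Lemma amal_act_r_img g f l : reduced a b l -> amal_act_r a b (b g) (f, l) = (gmul g f, l).
Proof.
  intro Hl. unfold amal_act_r, swap_state at 2. simpl.
  rewrite amal_act_l_img by (exact b_emb || apply reduced_swap, Hl).
  apply (swap_stateK (gmul g f, l)).
Qed.

Lemma amal_act_r_not_reduced k x : ~ reduced a b (snd x) -> amal_act_r a b k x = x.
Proof.
  intro N. unfold amal_act_r. rewrite amal_act_l_not_reduced, swap_stateK; auto.
  simpl. rewrite reduced_swap. exact N.
Qed.

Definition no_B_head (s : list (A + B)) : Prop :=
  match s with inr _ :: _ => False | _ => True end.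

Lemma amal_act_r_tail k f l : reduced a b l ->
  exists y, (l = y /\ no_B_head y \/ exists u, l = inr u :: y) /\
     (snd (amal_act_r a b k (f, l)) = y \/ exists u, snd (amal_act_r a b k (f, l)) = inr u :: y).
Proof.
  intro Hl. apply reduced_swap in Hl.
  destruct (amal_act_l_tail b a k f _ Hl) as [y [Hin Hout]].
  assert (Hlb : map swap_letter (map swap_letter l) = l)
    by apply (f_equal snd (swap_stateK (f, l))).
  exists (map swap_letter y). split.
  - destruct Hin as [[E N]|[u E]].
    + left. subst y. rewrite Hlb. split; auto. destruct l as [|[]]; simpl in *; auto.
    + right. exists u. rewrite <- Hlb, E. reflexivity.
  - unfold amal_act_r, swap_state. simpl.
    destruct Hout as [E|[u E]]; rewrite E; simpl; eauto.
Qed.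

End AmalgamOtherHalfAction.

Section AmalgamCost.
Context {F A B : group} (a : F -> A) (b : F -> B) (len : A -> nat).

Definition last_syllable_cost (s : list (A + B)) : nat :=
  match last s (inr gone) with inl t => len t | inr _ => 0 end.

Definition syllable_cost (p : A * list (A + B)) : nat :=
  match snd p with [] => len (fst p) | s => last_syllable_cost s end.

(** The length of the last [A]-syllable, into which [a f] is absorbed when the form has at
    most one [A]-syllable; it is [0] when the form ends with a [B]-letter. *)
Definition amal_cost (x : F * list (A + B)) : nat := syllable_cost (unfold_head a x).

Hypothesis a_emb : embedding a.

Lemma amal_cost_act_l s x :
  (forall h, len (gmul s h) <= S (len h)) -> amal_cost (amal_act_l a b s x) <= S (amal_cost x).
Proof.
  intro Hs. destruct x as [f l]. destruct (classic (reduced a b l)) as [Hl|Hl].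
  - destruct (unfold_head_reduced a b f l Hl) as [_ Nr].
    unfold amal_cost. rewrite amal_act_l_reduced, unfold_fold_head by assumption.
    unfold syllable_cost. simpl. destruct (snd (unfold_head a (f, l))); auto.
  - rewrite amal_act_l_not_reduced by exact Hl. auto.
Qed.

Lemma amal_cost_base h : amal_cost (amal_act_l a b h (gone, [])) = len h.
Proof.
  unfold amal_cost. rewrite amal_act_l_reduced by exact I.
  change (unfold_head a (gone, [])) with (a gone, @nil (A + B)). simpl.
  rewrite (hom_one a (proj1 a_emb)), gmul1r, unfold_fold_head; [reflexivity | exact a_emb | exact I].
Qed.

Hypotheses (len_mul_img : forall f h, len (gmul (a f) h) <= S (len h))
           (len_one : len gone = 0).

Lemma len_mul_img_inv f h : len h <= S (len (gmul (a f) h)).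
Proof.
  rewrite <- (mulKg (a f) h) at 1. rewrite <- (hom_inv a (proj1 a_emb)). apply len_mul_img.
Qed.

Lemma len_mul_img_change f f' h : len (gmul (a f) h) <= S (len (gmul (a f') h)).
Proof.
  replace (gmul (a f) h) with (gmul (a (gmul f (ginv f'))) (gmul (a f') h)).
  - apply len_mul_img.
  - rewrite (proj1 a_emb), <- gmulA, (hom_inv a (proj1 a_emb)), mulKg. reflexivity.
Qed.

Lemma len_img f : len (a f) <= 1.
Proof. rewrite <- (gmul1r _ (a f)), <- len_one. apply len_mul_img. Qed.

Lemma amal_cost_act_r k x : amal_cost (amal_act_r a b k x) <= S (amal_cost x).
Proof.
  destruct x as [f l]. destruct (classic (reduced a b l)) as [Hl|Hl].
  2: { rewrite amal_act_r_not_reduced by exact Hl. auto. }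
  (* Only [f] and a [B]-letter at the head change, which moves the cost by at most one. *)
  destruct (amal_act_r_tail a b k f l Hl) as [y [Hin Hout]].
  destruct (amal_act_r a b k (f, l)) as [f' l']. simpl in Hout.
  pose proof (len_img f'). pose proof len_mul_img. pose proof len_mul_img_inv.
  pose proof len_mul_img_change.
  unfold amal_cost, syllable_cost, last_syllable_cost, unfold_head. simpl.
  destruct Hin as [[-> N]|[u ->]]; destruct Hout as [->|[u' ->]];
    destruct y as [|[t|u''] [|z r]]; simpl in *; auto; lia.
Qed.

End AmalgamCost.

(** * Normal forms in an HNN extension *)

(** [sl true] and [sl false] are the embeddings [a] and [b] of the associated subgroups.
    A state [(h, [(e1, r1); ...; (en, rn)])] stands for [h * t_e1 * r1 * ... * t_en * rn]
    with [t_true = t] and [t_false = t^-1], so that [t_e * sl e f = sl (negb e) f * t_e].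
    Each [ri] represents a right coset of the image of [sl ei], and [ri = 1] is only allowed
    between letters of the same sign, which excludes pinches. *)
Section HNNNormalForms.
Context {F H : group} (sl : bool -> F -> H).

Fixpoint hnn_reduced (s : list (bool * H)) : Prop :=
  match s with
  | [] => True
  | (e, r) :: s' =>
      rep (sl e) r = r /\
      match s' with [] => True | (e', _) :: _ => r = gone -> e' = e end /\
      hnn_reduced s'
  end.

Definition starts_with (e : bool) (s : list (bool * H)) : Prop :=
  match s with (e', _) :: _ => e' = e | [] => False end.

Definition hnn_step (e : bool) (x : H * list (bool * H)) : H * list (bool * H) :=
  if excluded_middle_informative (hnn_reduced (snd x)) then
    if excluded_middle_informative (in_img (sl e) (fst x) /\ starts_with (negb e) (snd x))
    then (gmul (sl (negb e) (fpart (sl e) (fst x))) (snd (hd (e, gone) (snd x))), tl (snd x))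
    else (sl (negb e) (fpart (sl e) (fst x)), (e, rep (sl e) (fst x)) :: snd x)
  else x.

Definition hnn_act (g : H) (x : H * list (bool * H)) : H * list (bool * H) :=
  if excluded_middle_informative (hnn_reduced (snd x)) then (gmul g (fst x), snd x) else x.

Hypothesis sl_emb : forall e, embedding (sl e).

Lemma hnn_step_not_reduced e x : ~ hnn_reduced (snd x) -> hnn_step e x = x.
Proof. intro N. unfold hnn_step. destruct excluded_middle_informative; tauto. Qed.

Lemma hnn_step_push e h s :
  hnn_reduced s -> ~ (in_img (sl e) h /\ starts_with (negb e) s) ->
  hnn_step e (h, s) = (sl (negb e) (fpart (sl e) h), (e, rep (sl e) h) :: s).
Proof.
  intros Hs N. unfold hnn_step. simpl.
  do 2 (destruct excluded_middle_informative; try tauto).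
Qed.

Lemma hnn_step_cancel e e' h r s :
  e' = negb e -> hnn_reduced ((e', r) :: s) -> in_img (sl e) h ->
  hnn_step e (h, (e', r) :: s) = (gmul (sl (negb e) (fpart (sl e) h)) r, s).
Proof.
  intros -> Hs Hh. unfold hnn_step. simpl.
  do 2 (destruct excluded_middle_informative; try tauto).
Qed.

Lemma hnn_step_cases e h s :
  (in_img (sl e) h /\ exists r s', s = (negb e, r) :: s') \/
  ~ (in_img (sl e) h /\ starts_with (negb e) s).
Proof.
  destruct (classic (in_img (sl e) h /\ starts_with (negb e) s)) as [[Hh Hs]|N]; [|tauto].
  left. destruct s as [|[e' r] s']; simpl in Hs; [tauto|]. subst. eauto.
Qed.

Lemma hnn_step_reduced e h s : hnn_reduced s -> hnn_reduced (snd (hnn_step e (h, s))).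
Proof.
  intro Hs. destruct (hnn_step_cases e h s) as [[Hh [r [s' ->]]]|N].
  - rewrite hnn_step_cancel; auto. apply Hs.
  - rewrite hnn_step_push by auto. simpl. split; [|split; auto].
    + apply rep_idem, sl_emb.
    + destruct s as [|[e' r'] s']; auto. intro E1.
      destruct (Bool.bool_dec e' e) as [|Ne]; auto. exfalso. apply N. split.
      * apply (in_img_rep_one (sl e)); auto.
      * simpl. destruct e, e'; simpl in *; congruence.
Qed.

Lemma hnn_stepK e x : hnn_step (negb e) (hnn_step e x) = x.
Proof.
  destruct x as [h s]. destruct (classic (hnn_reduced s)) as [Hs|Hs].
  2: { rewrite !(hnn_step_not_reduced _ (h, s)) by exact Hs. reflexivity. }
  destruct (hnn_step_cases e h s) as [[Hh [r [s' ->]]]|N].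
  - destruct Hs as [Er [Hpinch Hs']].
    rewrite hnn_step_cancel by (auto; split; auto).
    assert (Npinch : ~ (in_img (sl (negb e)) (gmul (sl (negb e) (fpart (sl e) h)) r)
                        /\ starts_with (negb (negb e)) s')).
    { rewrite in_img_mul, negb_involutive by auto. intros [Hr Hst].
      destruct s' as [|[e'' r''] s'']; simpl in Hst; [tauto|]. subst e''.
      specialize (Hpinch (rep_fixed_in_img _ (sl_emb _) r Er Hr)).
      destruct e; discriminate. }
    rewrite hnn_step_push by auto.
    rewrite fpart_mul, rep_mul, (fpart_rep_fixed _ (sl_emb _) r), Er, gmul1r, negb_involutive; auto.
    rewrite img_fpart; auto.
  - assert (Hs2 := hnn_step_reduced e h s Hs). rewrite hnn_step_push in * by auto.
    rewrite hnn_step_cancel, fpart_img, negb_involutive, <- fpart_spec; auto.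
    + symmetry. apply negb_involutive.
    + exists (fpart (sl e) h). reflexivity.
Qed.

Lemma hnn_act_one x : hnn_act gone x = x.
Proof.
  destruct x as [h s]. unfold hnn_act. simpl.
  destruct excluded_middle_informative; rewrite ?gmul1l; reflexivity.
Qed.

Lemma hnn_act_mul g1 g2 x : hnn_act (gmul g1 g2) x = hnn_act g1 (hnn_act g2 x).
Proof.
  destruct x as [h s]. unfold hnn_act. simpl.
  destruct excluded_middle_informative; simpl;
    destruct excluded_middle_informative; try tauto; rewrite ?gmulA; reflexivity.
Qed.

Lemma hnn_step_act e g x :
  hnn_step e (hnn_act (sl e g) x) = hnn_act (sl (negb e) g) (hnn_step e x).
Proof.
  destruct x as [h s]. unfold hnn_act at 1. simpl.
  destruct excluded_middle_informative as [Hs|Hs].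
  2: { rewrite hnn_step_not_reduced by exact Hs. unfold hnn_act. simpl.
       destruct excluded_middle_informative; tauto. }
  unfold hnn_act. destruct excluded_middle_informative as [_|N].
  2: { exfalso. apply N, hnn_step_reduced, Hs. }
  assert (Hmul := proj1 (sl_emb (negb e))).
  destruct (hnn_step_cases e h s) as [[Hh [r [s' ->]]]|N].
  - rewrite !hnn_step_cancel; auto.
    + simpl. rewrite fpart_mul, Hmul, gmulA; auto.
    + rewrite in_img_mul; auto.
  - rewrite !hnn_step_push; auto.
    + simpl. rewrite fpart_mul, rep_mul, Hmul; auto.
    + rewrite in_img_mul; auto.
Qed.

End HNNNormalForms.

Section HNNCost.
Context {F H : group} (sl : bool -> F -> H) (len : H -> nat).

Definition hnn_cost (x : H * list (bool * H)) : nat :=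
  match snd x with [] => len (fst x) | s => len (snd (last s (true, gone))) end.

Lemma hnn_cost_act g x :
  (forall h, len (gmul g h) <= S (len h)) -> hnn_cost (hnn_act sl g x) <= S (hnn_cost x).
Proof.
  intro Hg. destruct x as [h s]. unfold hnn_act, hnn_cost. simpl.
  destruct excluded_middle_informative; simpl; auto. destruct s; auto.
Qed.

Lemma hnn_cost_base h : hnn_cost (hnn_act sl h (gone, [])) = len h.
Proof.
  unfold hnn_cost, hnn_act. simpl.
  destruct excluded_middle_informative as [_|N]; [|simpl in N; tauto].
  rewrite gmul1r. reflexivity.
Qed.

Hypotheses (sl_emb : forall e, embedding (sl e))
           (len_mul_img : forall e f h, len (gmul (sl e f) h) <= S (len h)).

Lemma hnn_cost_step e x : hnn_cost (hnn_step sl e x) <= S (hnn_cost x).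
Proof.
  destruct x as [h s]. destruct (classic (hnn_reduced sl s)) as [Hs|Hs].
  2: { rewrite hnn_step_not_reduced by exact Hs. auto. }
  destruct (hnn_step_cases sl e h s) as [[Hh [r [s' ->]]]|N].
  - rewrite hnn_step_cancel by auto. unfold hnn_cost. simpl.
    destruct s' as [|y s'']; simpl; auto.
  - rewrite hnn_step_push by auto. unfold hnn_cost. simpl.
    destruct s as [|y s']; simpl; auto.
    rewrite (fpart_spec (sl e) (sl_emb e) h) at 2.
    rewrite <- (mulKg (sl e (fpart (sl e) h)) (rep (sl e) h)) at 1.
    rewrite <- (hom_inv _ (proj1 (sl_emb e))). apply len_mul_img.
Qed.

End HNNCost.

Definition isometric_gen_sets (G H : group) (i : H -> G) : Prop :=
  exists (SH : list H) (SG : list G),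
    gen_set H SH /\ gen_set G SG /\ (forall s, In s SH -> In (i s) SG) /\
    forall (h1 h2 : H) (n : nat),
      word_dist H SH h1 h2 n <-> word_dist G SG (i h1) (i h2) n.

Lemma inv_closed_map {G H : group} (i : H -> G) (SH : list H) :
  is_hom i -> (forall s, In s SH -> In (ginv s) SH) ->
  forall s, In s (map i SH) -> In (ginv s) (map i SH).
Proof.
  intros Hi Hinv s Hs. apply in_map_iff in Hs as [z [<- Hz]].
  rewrite <- (hom_inv i Hi). apply in_map, Hinv, Hz.
Qed.

Lemma hom_eq_on_gen_set {H L : group} (SH : list H) (p q : H -> L) :
  gen_set H SH -> is_hom p -> is_hom q -> (forall s, In s SH -> p s = q s) ->
  forall h, p h = q h.
Proof. intros [_ Hspan] Hp Hq E h. exact (hom_eq_on_span SH p q Hp Hq E h (Hspan h)). Qed.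

Lemma amalgam_gen_set (G H K F : group) (i : H -> G) (j : K -> G) (a : F -> H) (b : F -> K)
    (SH : list H) (SK : list K) :
  is_amalgam G H K F i j a b -> gen_set H SH -> gen_set K SK ->
  gen_set G (map i SH ++ map j SK).
Proof.
  intros [Hi [Hj [Hc UP]]] GH GK. apply gen_set_of_homs_determined.
  - intros s Hs. apply in_app_or in Hs as [Hs|Hs]; apply in_or_app;
      [left; apply (inv_closed_map i SH) | right; apply (inv_closed_map j SK)];
      auto; [apply GH | apply GK].
  - intros p q Hp Hq E.
    assert (EH : forall h, p (i h) = q (i h)).
    { apply (hom_eq_on_gen_set SH); auto using hom_comp.
      intros s Hs. apply E, in_or_app. left. apply in_map, Hs. }
    assert (EK : forall k, p (j k) = q (j k)).
    { apply (hom_eq_on_gen_set SK); auto using hom_comp.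
      intros s Hs. apply E, in_or_app. right. apply in_map, Hs. }
    apply (proj2 (UP _ (fun h => p (i h)) (fun k => p (j k)) (hom_comp i p Hi Hp)
                     (hom_comp j p Hj Hp) (fun f => f_equal p (Hc f)))); auto.
Qed.

Lemma hnn_gen_set (G H F : group) (i : H -> G) (t : G) (a b : F -> H) (SH : list H) :
  is_HNN G H F i t a b -> gen_set H SH -> gen_set G (map i SH ++ [t; ginv t]).
Proof.
  intros [Hi [Hrel UP]] GH. apply gen_set_of_homs_determined.
  - intros s Hs. apply in_app_or in Hs as [Hs|[<-|[<-|[]]]]; apply in_or_app.
    + left. apply (inv_closed_map i SH); auto. apply GH.
    + right. right. left. reflexivity.
    + right. left. symmetry. apply inv_inv.
  - intros p q Hp Hq E.
    assert (EH : forall h, p (i h) = q (i h)).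
    { apply (hom_eq_on_gen_set SH); auto using hom_comp.
      intros s Hs. apply E, in_or_app. left. apply in_map, Hs. }
    assert (Et : p t = q t) by (apply E, in_or_app; right; left; reflexivity).
    assert (Hrel' : forall f, gmul (gmul (p t) (p (i (a f)))) (ginv (p t)) = p (i (b f))).
    { intro f. rewrite <- Hrel, !Hp, (hom_inv p Hp). reflexivity. }
    apply (proj2 (UP _ (fun h => p (i h)) (p t) (hom_comp i p Hi Hp) Hrel')); auto.
Qed.

Lemma amalgam_isometric (G H K F : group) (i : H -> G) (j : K -> G) (a : F -> H)
    (b : F -> K) :
  embedding a -> embedding b -> finite_group F -> finitely_generated H ->
  finitely_generated K -> is_amalgam G H K F i j a b -> isometric_gen_sets G H i.
Proof.
  intros Ha Hb [lF HF] [L0 HL0] [M0 HM0] Ham.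
  set (L := L0 ++ map a lF). set (SH := L ++ map ginv L). set (SK := M0 ++ map ginv M0).
  assert (GH : gen_set H SH) by (apply (gen_set_symmetrize L0); [apply incl_appl, incl_refl | exact HL0]).
  assert (GK : gen_set K SK) by (apply (gen_set_symmetrize M0); [apply incl_refl | exact HM0]).
  assert (aSH : forall f, In (a f) SH)
    by (intro f; apply in_or_app; left; apply in_or_app; right; apply in_map, HF).
  pose proof (amalgam_gen_set G H K F i j a b SH SK Ham GH GK) as GG.
  destruct Ham as [Hi [_ [_ UP]]].
  set (pH := act_perm (amal_act_l a b) (amal_act_l_one a b Ha) (amal_act_l_mul a b Ha)).
  set (pK := act_perm (amal_act_r a b) (amal_act_r_one a b Hb) (amal_act_r_mul a b Hb)).
  assert (Hagree : forall f, pH (a f) = pK (b f)).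
  { intro f. apply perm_ext. intros [f0 l]. simpl.
    destruct (classic (reduced a b l)) as [Hl|Hl].
    - rewrite amal_act_l_img, amal_act_r_img; auto.
    - rewrite amal_act_l_not_reduced, amal_act_r_not_reduced; auto. }
  destruct (proj1 (UP _ pH pK (act_perm_hom _ _ _) (act_perm_hom _ _ _) Hagree))
    as [p [Hp [Hpi Hpj]]].
  exists SH, (map i SH ++ map j SK). split; [exact GH|]. split; [exact GG|].
  assert (Hsub : forall s, In s SH -> In (i s) (map i SH ++ map j SK))
    by (intros s Hs; apply in_or_app; left; apply in_map, Hs).
  split; [exact Hsub|].
  apply (word_dist_iff_of_cost i SH _ p (amal_cost a (word_length SH)) (gone, []) Hi Hp GH Hsub).
  - intros s x Hs. apply in_app_or in Hs as [Hs|Hs]; apply in_map_iff in Hs as [z [<- Hz]].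
    + rewrite Hpi. apply amal_cost_act_l; auto.
      intro h. apply word_length_mul_gen; auto. apply GH.
    + rewrite Hpj. apply amal_cost_act_r; auto using word_length_one.
      intros f h. apply word_length_mul_gen; auto. apply GH.
  - intro h. rewrite Hpi. apply amal_cost_base, Ha.
Qed.

Lemma hnn_isometric (G H F : group) (i : H -> G) (t : G) (a b : F -> H) :
  embedding a -> embedding b -> finite_group F -> finitely_generated H ->
  is_HNN G H F i t a b -> isometric_gen_sets G H i.
Proof.
  intros Ha Hb [lF HF] [L0 HL0] HNN.
  set (sl := fun e : bool => if e then a else b).
  assert (sl_emb : forall e, embedding (sl e)) by (intros []; assumption).
  set (L := L0 ++ map a lF ++ map b lF). set (SH := L ++ map ginv L).
  assert (GH : gen_set H SH) by (apply (gen_set_symmetrize L0); [apply incl_appl, incl_refl | exact HL0]).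
  assert (slSH : forall e f, In (sl e f) SH).
  { intros e f. apply in_or_app. left. apply in_or_app. right. apply in_or_app.
    destruct e; [left|right]; apply in_map, HF. }
  pose proof (hnn_gen_set G H F i t a b SH HNN GH) as GG.
  destruct HNN as [Hi [_ UP]].
  set (pH := act_perm (hnn_act sl) (hnn_act_one sl) (hnn_act_mul sl)).
  set (T := Perm (hnn_step sl true) (hnn_step sl false)
                 (hnn_stepK sl sl_emb false) (hnn_stepK sl sl_emb true) : perm_group _).
  assert (Hrel : forall f, gmul (gmul T (pH (a f))) (ginv T) = pH (b f)).
  { intro f. apply perm_ext. intro x. simpl. change (a f) with (sl true f).
    rewrite hnn_step_act, (hnn_stepK sl sl_emb false); auto. }
  destruct (proj1 (UP _ pH T (act_perm_hom _ _ _) Hrel)) as [p [Hp [Hpi Hpt]]].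
  exists SH, (map i SH ++ [t; ginv t]). split; [exact GH|]. split; [exact GG|].
  assert (Hsub : forall s, In s SH -> In (i s) (map i SH ++ [t; ginv t]))
    by (intros s Hs; apply in_or_app; left; apply in_map, Hs).
  split; [exact Hsub|].
  assert (Hlen : forall e f h, word_length SH (gmul (sl e f) h) <= S (word_length SH h))
    by (intros; apply word_length_mul_gen; auto; apply GH).
  apply (word_dist_iff_of_cost i SH _ p (hnn_cost (word_length SH)) (gone, []) Hi Hp GH Hsub).
  - intros s x Hs. apply in_app_or in Hs as [Hs|[<-|[<-|[]]]].
    + apply in_map_iff in Hs as [z [<- Hz]]. rewrite Hpi. apply hnn_cost_act.
      intro h. apply word_length_mul_gen; auto. apply GH.
    + rewrite Hpt. apply (hnn_cost_step sl); auto.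
    + rewrite (hom_inv p Hp), Hpt. apply (hnn_cost_step sl); auto.
  - intro h. rewrite Hpi. apply hnn_cost_base.
Qed.

Theorem lemma3p2 (G H : group) (i : H -> G) :
  finitely_generated G -> finitely_generated H ->
  ((exists (K F : group) (j : K -> G) (a : F -> H) (b : F -> K),
       is_hom a /\ is_hom b /\ injective a /\ injective b /\
       finite_group F /\ finitely_generated K /\ is_amalgam G H K F i j a b)
   \/
   (exists (F : group) (t : G) (a b : F -> H),
       is_hom a /\ is_hom b /\ injective a /\ injective b /\
       finite_group F /\ is_HNN G H F i t a b)) ->
  exists (SH : list H) (SG : list G),
    gen_set H SH /\ gen_set G SG /\ (forall s, In s SH -> In (i s) SG) /\
    forall (h1 h2 : H) (n : nat),
      word_dist H SH h1 h2 n <-> word_dist G SG (i h1) (i h2) n.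
Proof.
  intros _ HH [[K [F [j [a [b [Ha [Hb [ia [ib [HF [HK Ham]]]]]]]]]]]
              |[F [t [a [b [Ha [Hb [ia [ib [HF HHNN]]]]]]]]]].
  - exact (amalgam_isometric G H K F i j a b (conj Ha ia) (conj Hb ib) HF HH HK Ham).
  - exact (hnn_isometric G H F i t a b (conj Ha ia) (conj Hb ib) HF HH HHNN).
Qed.
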